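(* Let $(G=(V,E),\sigma)$ be a properly $n$-colored graph containing a hub-vertex $x$, and let $(H,\sigma'):=(G-x,\sigma|_{V\setminus\{x\}})$. Then $F$ is an optimal deletion set (resp. optimal edit set) for $(G,\sigma)$, i.e. an optimal set with $(G\setminus F,\sigma)$ (resp. $(G\triangle F,\sigma)$) an $n$-RBMG, if and only if $F$ is an optimal set such that $(H\setminus F,\sigma')$ (resp. $(H\triangle F,\sigma')$) is an $(n-1)$-RBMG.
   Context: All graphs are finite, simple and undirected; $G\setminus F=(V,E\setminus F)$, $G\triangle F=(V,E\triangle F)$; $G-x$ is obtained by deleting vertex $x$ and its incident edges. A vertex coloring is a surjective map $\sigma:V\to S$; properly $n$-colored means adjacent vertices get distinct colors and $|S|=n$. A hub-vertex is a vertex adjacent to all other vertices. A phylogenetic tree $T$ on $L$ is a rooted tree with leaf set $L$ whose inner vertices other than the root have degree at least three; $u\preceq_T v$ means $v$ lies on the root-to-$u$ path; $\mathrm{lca}_T$ is last common ancestor. For surjective $\sigma:L\to S$, $y$ is a best match of $x$ if $\sigma(x)\neq\sigma(y)$ and $\mathrm{lca}_T(x,y)\preceq_T\mathrm{lca}_T(x,y')$ for all $y'$ with $\sigma(y')=\sigma(y)$; $G(T,\sigma)$ is the graph on $L$ whose edges are the reciprocal best match pairs. A properly colored $(G,\sigma)$ is an RBMG if $G(T,\sigma)=(G,\sigma)$ for some $(T,\sigma)$; an $n$-RBMG if exactly $n$ colors are used. For a properly $m$-colored graph, a deletion set $F\subseteq E$ (resp. edit set $F\subseteq\binom{V}{2}$)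 is one making the graph an $m$-RBMG by deletion (resp. symmetric difference); it is optimal if of minimum cardinality among such sets. *)

From mathcomp Require Import all_boot.
Set Implicit Arguments. Unset Strict Implicit. Unset Printing Implicit Defensive.

Section Graphs.
Variables (V S : finType).

Definition pairs (U : {set V}) : {set {set V}} :=
  [set e : {set V} | (e \subset U) && (#|e| == 2)].

Definition wf_graph (U : {set V}) (E : {set {set V}}) : Prop := E \subset pairs U.

Definition adj (E : {set {set V}}) (a b : V) : bool := (a != b) && ([set a; b] \in E).

Definition del_vertex (U : {set V}) (E : {set {set V}}) (x : V) :=
  (U :\ x, [set e in E | x \notin e]).

Definition symdiff (E F : {set {set V}}) := (E :\: F) :|: (F :\: E).

Definition hub (U : {set V}) (E : {set {set V}}) (x : V) : Prop :=
  x \in U /\ forall y, y \in U -> y != x -> adj E x y.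

Definition ncolors (U : {set V}) (sigma : V -> S) : nat := #|sigma @: U|.

Definition proper (U : {set V}) (E : {set {set V}}) (sigma : V -> S) : Prop :=
  forall a b, a \in U -> b \in U -> adj E a b -> sigma a != sigma b.

Definition properly_colored (U : {set V}) (E : {set {set V}}) (sigma : V -> S) (n : nat) :=
  [/\ wf_graph U E, proper U E sigma & ncolors U sigma = n].
End Graphs.

Section Trees.
Variables (T : finType) (p : T -> T) (r : T).

Definition rooted_tree : Prop := p r = r /\ forall v, fconnect p v r.

Definition children (v : T) : {set T} := [set w | (w != r) && (p w == v)].

Definition is_leaf (v : T) : bool := children v == set0.

(* inner vertices other than the root have degree >= 3, i.e. >= 2 children *)
Definition phylo_tree : Prop :=
  rooted_tree /\ forall v, v != r -> ~~ is_leaf v -> 2 <= #|children v|.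

(* u <=_T v : v lies on the root-to-u path *)
Definition anc (u v : T) : bool := fconnect p u v.

Definition is_lca (a b z : T) : bool :=
  [&& anc a z, anc b z & [forall w, (anc a w && anc b w) ==> anc z w]].

Definition lca (a b : T) : T := odflt r [pick z | is_lca a b z].
End Trees.

Section RBMG.
Variables (V S : finType).

Definition best_match (U : {set V}) (sigma : V -> S) (T : finType) (p : T -> T) (r : T)
  (lf : V -> T) (x y : V) : Prop :=
  [/\ x \in U, y \in U, sigma x != sigma y &
      forall y', y' \in U -> sigma y' = sigma y ->
        anc p (lca p r (lf x) (lf y)) (lca p r (lf x) (lf y'))].

(* (T,sigma) with leaf set U (via the bijection lf : U -> leaves) explains (U,E) *)
Definition explains (U : {set V}) (E : {set {set V}}) (sigma : V -> S)
  (T : finType) (p : T -> T) (r : T) (lf : V -> T) : Prop :=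
  [/\ phylo_tree p r,
      {in U &, injective lf},
      (forall t, is_leaf p r t <-> exists2 a, a \in U & lf a = t) &
      (forall a b, a \in U -> b \in U ->
         (adj E a b <-> best_match U sigma p r lf a b /\ best_match U sigma p r lf b a))].

(* n-RBMG; the empty graph is regarded as (explained by the empty tree) *)
Definition nRBMG (U : {set V}) (E : {set {set V}}) (sigma : V -> S) (n : nat) : Prop :=
  properly_colored U E sigma n /\
  (U = set0 \/ exists (T : finType) (p : T -> T) (r : T) (lf : V -> T),
                 explains U E sigma p r lf).

Definition deletion_set (U : {set V}) (E : {set {set V}}) (sigma : V -> S) (m : nat) (F : {set {set V}}) : Prop :=
  F \subset E /\ nRBMG U (E :\: F) sigma m.

Definition edit_set (U : {set V}) (E : {set {set V}}) (sigma : V -> S) (m : nat) (F : {set {set V}}) : Prop :=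
  F \subset pairs U /\ nRBMG U (symdiff E F) sigma m.

Definition optimal_deletion_set (U : {set V}) (E : {set {set V}}) (sigma : V -> S) (m : nat) (F : {set {set V}}) : Prop :=
  deletion_set U E sigma m F /\
  forall F' : {set {set V}}, deletion_set U E sigma m F' -> #|F| <= #|F'|.

Definition optimal_edit_set (U : {set V}) (E : {set {set V}}) (sigma : V -> S) (m : nat) (F : {set {set V}}) : Prop :=
  edit_set U E sigma m F /\
  forall F' : {set {set V}}, edit_set U E sigma m F' -> #|F| <= #|F'|.
End RBMG.

From Pilot Require Import Defs.
From mathcomp Require Import all_boot.
Set Implicit Arguments. Unset Strict Implicit. Unset Printing Implicit Defensive.

(* Being adjacent to everything, x has a color of its own.  The
   proof rests on two tree constructions:
   - extension: if a tree explains an (n-1)-RBMG on U :\ x, attaching a new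
     leaf for x directly below its root explains the graph obtained by
     joining x to every vertex, which is thus an n-RBMG on U;
   - restriction: if a tree explains an n-RBMG on U, deleting the leaf of
     the uniquely colored x (and suppressing its parent when that parent is
     left with a single child) explains the graph with x removed.
   Degenerate trees (no leaves, or a single leaf) are replaced by a star.
   Hence a set F of edges avoiding x modifies G into an n-RBMG iff it
   modifies H into an (n-1)-RBMG, while any modification set of G can be
   cut down to its edges avoiding x.  An abstract transfer lemma on
   minimum-cardinality sets then yields the theorem for both deletion and
   edit sets. *)

Section RootedTree.
Variables (T : finType) (p : T -> T) (r : T).
Hypothesis rt : rooted_tree p r.

Lemma root_fixed : p r = r. Proof. by case: rt. Qed.

Lemma anc_iterP u v : anc p u v <-> exists n, iter n p u = v.
Proof.
split; first by move=> h; exists (findex p u v); exact: iter_findex.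
by case=> n <-; exact: fconnect_iter.
Qed.

Lemma anc_refl u : anc p u u. Proof. exact: connect0. Qed.

Lemma anc_trans u v w : anc p u v -> anc p v w -> anc p u w.
Proof. exact: connect_trans. Qed.

Lemma anc_parent u : anc p u (p u). Proof. exact: fconnect1. Qed.

Lemma anc_root u : anc p u r. Proof. by case: rt => _ /(_ u). Qed.

Lemma fixed_root t : p t = t -> t = r.
Proof.
move=> ptt; have [n <-] := (anc_iterP t r).1 (anc_root t).
by rewrite iter_fix.
Qed.

Lemma anc_antisym u v : anc p u v -> anc p v u -> u = v.
Proof.
move=> /anc_iterP [m uv] /anc_iterP [k vu].
have cycle_u : iter (k + m) p u = u by rewrite iterD uv vu.
have [t ur] := (anc_iterP u r).1 (anc_root u).
have [|km_gt0] := posnP (k + m).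
  by move/eqP; rewrite addn_eq0 => /andP [_ /eqP m0]; rewrite -uv m0.
have cycles : forall j, iter ((k + m) * j) p u = u.
  by elim=> [|j IH]; rewrite ?muln0 // mulnS iterD IH cycle_u.
have u_root : u = r.
  rewrite -(cycles t) -(subnK (leq_pmull t km_gt0)) iterD ur iter_fix //.
  exact: root_fixed.
by rewrite -uv u_root iter_fix // root_fixed.
Qed.

Lemma below_child a v : anc p a v -> a != v ->
  exists2 c, c \in children p r v & anc p a c.
Proof.
move=> /anc_iterP [n]; elim: n a => [|n IH] a; first by move=> /= ->; rewrite eqxx.
rewrite iterSr => av a_neq_v.
have [pa_v|pa_neq_v] := eqVneq (p a) v.
  exists a; last exact: anc_refl.
  rewrite inE pa_v eqxx andbT; apply: contra a_neq_v => /eqP ar.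
  by rewrite -pa_v ar root_fixed.
have [c cv ac] := IH _ av pa_neq_v.
by exists c => //; apply: anc_trans (anc_parent a) ac.
Qed.

Lemma anc_leaf a v : is_leaf p r v -> anc p a v -> a = v.
Proof.
move=> /eqP v_leaf av; apply/eqP; apply/negPn/negP => a_neq_v.
by have [c] := below_child av a_neq_v; rewrite v_leaf inE.
Qed.

Lemma leaf_root : is_leaf p r r -> forall v, v = r.
Proof. by move=> r_leaf v; apply: anc_leaf r_leaf (anc_root v). Qed.

Lemma child_parent c v : c \in children p r v -> p c = v.
Proof. by rewrite inE => /andP [_ /eqP]. Qed.

Lemma child_neq c v : c \in children p r v -> c != v.
Proof.
rewrite inE => /andP [c_neq_r /eqP pc]; apply: contraNneq c_neq_r => cv.
by apply/eqP/fixed_root; rewrite pc cv.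
Qed.

Lemma child_nonleaf c v : c \in children p r v -> ~~ is_leaf p r v.
Proof. by move=> cv; apply/set0Pn; exists c. Qed.

(* The lca of a and b is the first ancestor of a that is an ancestor of b. *)
Lemma lca_exists a b : exists z, is_lca p a b z.
Proof.
have exP : exists k, anc p b (iter k p a).
  have [t at_r] := (anc_iterP a r).1 (anc_root a).
  by exists t; rewrite at_r; exact: anc_root.
have [k bk kmin] := ex_minnP exP.
exists (iter k p a); apply/and3P; split => //; first exact: fconnect_iter.
apply/forallP => w; apply/implyP => /andP [aw bw].
have jw := iter_findex aw.
have k_le : k <= findex p a w by apply: kmin; rewrite jw.
by rewrite -jw -(subnK k_le) iterD; exact: fconnect_iter.
Qed.

Lemma is_lca_uniq a b z1 z2 : is_lca p a b z1 -> is_lca p a b z2 -> z1 = z2.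
Proof.
move=> /and3P [az1 bz1 /forallP min1] /and3P [az2 bz2 /forallP min2].
by apply: anc_antisym; [move/implyP: (min1 z2) | move/implyP: (min2 z1)];
  apply; apply/andP.
Qed.

Lemma lca_spec a b : is_lca p a b (lca p r a b).
Proof.
rewrite /lca; case: pickP => [z //|no_lca].
by have [z] := lca_exists a b; rewrite no_lca.
Qed.

Lemma lca_eq a b z : is_lca p a b z -> lca p r a b = z.
Proof. exact: is_lca_uniq (lca_spec a b). Qed.

End RootedTree.

Lemma adj_sym (V : finType) (E : {set {set V}}) a b : adj E a b = adj E b a.
Proof. by rewrite /adj eq_sym setUC. Qed.

Lemma explains_proper (V S : finType) (U : {set V}) E (sigma : V -> S)
  (T : finType) (p : T -> T) (r : T) (lf : V -> T) :
  explains U E sigma p r lf -> Defs.proper U E sigma.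
Proof. by case=> _ _ _ expl a b aU bU /(expl _ _ aU bU) [[_ _ ? _] _]. Qed.

(* The edges of F avoiding x; note that (del_vertex U E x).2 = avoiding x E. *)
Definition avoiding (V : finType) (x : V) (F : {set {set V}}) := [set e in F | x \notin e].

Lemma avoiding_sub (V : finType) (x : V) (F : {set {set V}}) : avoiding x F \subset F.
Proof. by apply/subsetP => e; rewrite inE => /andP []. Qed.

(* The star tree: a root whose children are the leaves {a | a \in U}.  It
   explains the complete graph on a nonempty U whose vertices have pairwise
   distinct colors, since then every vertex is a best match of every other. *)
Section StarTree.
Variables (V S : finType) (U : {set V}) (E : {set {set V}}) (sigma : V -> S).
Variable a0 : V.
Hypothesis a0U : a0 \in U.
Hypothesis sigma_inj : {in U &, injective sigma}.
Hypothesis complete : forall a b, a \in U -> b \in U -> (adj E a b <-> a != b).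

(* The root is None, the leaf of a is Some a. *)
Definition star_vertex := option {a : V | a \in U}.
Definition star_parent (t : star_vertex) : star_vertex := None.
Definition star_leaf (a : V) : star_vertex := insub a.

Lemma star_leafE a (aU : a \in U) : star_leaf a = Some (Sub a aU).
Proof.
rewrite /star_leaf; case: insubP => [u _ ua|]; last by rewrite aU.
by congr Some; apply: val_inj.
Qed.

Lemma star_is_leaf s : is_leaf star_parent None (Some s).
Proof. by apply/eqP/setP => w; rewrite !inE andbF. Qed.

Lemma star_best_match a b : a \in U -> b \in U -> a != b ->
  best_match U sigma star_parent None star_leaf a b.
Proof.
move=> aU bU ab; split => //; first by apply: contra ab => /eqP/sigma_inj ->.
by move=> b' b'U /sigma_inj -> //; exact: anc_refl.
Qed.

Lemma star_explains : explains U E sigma star_parent None star_leaf.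
Proof.
split.
- split; first by split => // v; exact: fconnect1.
  by move=> [s|] // _; rewrite star_is_leaf.
- by move=> a b aU bU; rewrite (star_leafE aU) (star_leafE bU) => [[]].
- move=> [s|]; split.
  + by move=> _; exists (val s); [exact: valP | rewrite /star_leaf valK].
  + by move=> _; exact: star_is_leaf.
  + by move/eqP/setP => /(_ (Some (Sub a0 a0U))); rewrite !inE.
  + by case=> a aU; rewrite (star_leafE aU).
- move=> a b aU bU; have [adj_neq neq_adj] := complete aU bU; split.
    by move/adj_neq => ab; split; apply: star_best_match; rewrite // eq_sym.
  by case=> [[_ _ sab _] _]; apply: neq_adj; apply: contra sab => /eqP ->.
Qed.
End StarTree.

(* Attaching a new leaf for x directly below the root of a tree explaining
   (U', E1).  If x \notin U' carries a color used nowhere on U', the new tree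
   explains the graph on x |: U' obtained by joining x to all of U': the
   lca of x with any other leaf is the root, so x and every y \in U' are
   reciprocal best matches, and nothing changes between old leaves. *)
Section AttachLeaf.
Variables (V S : finType) (U' : {set V}) (E1 : {set {set V}}) (sigma : V -> S).
Variables (T : finType) (p : T -> T) (r : T) (lf : V -> T) (x : V).
Hypothesis expl : explains U' E1 sigma p r lf.
Hypothesis root_inner : ~~ is_leaf p r r.
Hypothesis x_new : x \notin U'.
Hypothesis x_color : forall y, y \in U' -> sigma y != sigma x.

Let ph : phylo_tree p r. Proof. by case: expl. Qed.
Let rt : rooted_tree p r. Proof. by case: ph. Qed.

(* The new leaf is None; old vertices are wrapped in Some. *)
Definition att_parent (t : option T) : option T :=
  if t is Some u then Some (p u) else Some r.
Definition att_root : option T := Some r.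
Definition att_leaf (a : V) : option T := if a == x then None else Some (lf a).

Definition att_vertices := x |: U'.
Definition att_edges := E1 :|: [set [set x; y] | y in U'].

Lemma iter_att n t : iter n att_parent (Some t) = Some (iter n p t).
Proof. by elim: n => // n IH; rewrite !iterS IH. Qed.

Lemma att_ancSS u v : anc att_parent (Some u) (Some v) = anc p u v.
Proof.
apply/idP/idP.
  by move/iter_findex; rewrite iter_att => [[]] <-; exact: fconnect_iter.
by move/iter_findex => <-; rewrite -iter_att; exact: fconnect_iter.
Qed.

Lemma att_ancSN u : anc att_parent (Some u) None = false.
Proof. by apply/negP => /iter_findex; rewrite iter_att. Qed.

Lemma att_ancNS v : anc att_parent None (Some v) = (v == r).
Proof.
apply/idP/eqP => [|->]; last exact: fconnect1.
move/iter_findex; case: (findex _ _ _) => // n.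
by rewrite iterSr /= iter_att iter_fix ?root_fixed // => [[]].
Qed.

Lemma att_rooted : rooted_tree att_parent att_root.
Proof.
split; first by rewrite /att_root /= root_fixed.
case=> [u|]; last exact: fconnect1.
by have := att_ancSS u r; rewrite /anc => ->; exact: anc_root.
Qed.

Lemma att_childrenS v w : w \in children att_parent att_root (Some v) =
  if w is Some c then c \in children p r v else v == r.
Proof.
rewrite !inE; case: w => [c|] /=; first by rewrite /att_root inE !(inj_eq (@Some_inj _)).
by rewrite (inj_eq (@Some_inj _)) eq_sym.
Qed.

Lemma att_leafS t : is_leaf att_parent att_root (Some t) = is_leaf p r t.
Proof.
apply/eqP/eqP => /setP leaf_t; apply/setP.
  by move=> c; have := leaf_t (Some c); rewrite att_childrenS !in_set0.
case=> [c|]; rewrite att_childrenS ?leaf_t !in_set0 //.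
by apply: contraNF root_inner => /eqP tr; subst t; apply/eqP/setP.
Qed.

Lemma att_leafN : is_leaf att_parent att_root None.
Proof.
by apply/eqP/setP => w; rewrite !inE; case: w => [?|] //=; apply/andP => -[_ /eqP].
Qed.

Lemma att_phylo : phylo_tree att_parent att_root.
Proof.
split; first exact: att_rooted.
case=> [v|] v_neq_r; last by rewrite att_leafN.
rewrite att_leafS => v_inner.
have v_ne_r : v != r by apply: contra v_neq_r => /eqP ->.
apply: leq_trans (ph.2 v v_ne_r v_inner) _.
rewrite -(card_imset _ (@Some_inj _)); apply/subset_leq_card/subsetP.
by move=> w /imsetP [c cv ->]; rewrite att_childrenS.
Qed.

Lemma att_lcaSS a b :
  lca att_parent att_root (Some a) (Some b) = Some (lca p r a b).
Proof.
apply: (lca_eq att_rooted).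
have /and3P [az bz /forallP zmin] := lca_spec rt a b.
apply/and3P; split; rewrite ?att_ancSS //.
by apply/forallP => [[w|]]; rewrite ?att_ancSN // !att_ancSS; exact: zmin.
Qed.

Lemma att_lca_new b : lca att_parent att_root None (Some b) = att_root.
Proof.
apply: (lca_eq att_rooted); apply/and3P; split; rewrite ?att_ancNS ?att_ancSS ?anc_root //.
apply/forallP => [[w|]]; rewrite ?att_ancSN ?andbF // att_ancNS.
by apply/implyP => /andP [/eqP -> _]; exact: anc_refl.
Qed.

Lemma att_leafE a : a != x -> att_leaf a = Some (lf a).
Proof. by rewrite /att_leaf => /negbTE ->. Qed.

Lemma att_old a : a \in att_vertices -> a != x -> a \in U'.
Proof. by rewrite !inE => /orP [/eqP ->|//]; rewrite eqxx. Qed.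

Lemma old_neq_x a : a \in U' -> a != x.
Proof. by apply: contraTneq => ->. Qed.

Lemma same_color_neq_x b b' : b \in U' -> sigma b' = sigma b -> b' != x.
Proof. by move=> bU sb'; apply/eqP => b'x; move: (x_color bU); rewrite -sb' b'x eqxx. Qed.

Lemma att_best_match_old a b : a \in U' -> b \in U' ->
  best_match att_vertices sigma att_parent att_root att_leaf a b <->
  best_match U' sigma p r lf a b.
Proof.
move=> aU bU; have ax := old_neq_x aU; have bx := old_neq_x bU.
split=> -[_ _ sab bm]; split; rewrite ?inE ?aU ?bU ?orbT // => b' b'U sb'.
  have b'x := old_neq_x b'U.
  by have := bm b'; rewrite !att_leafE // !att_lcaSS att_ancSS inE b'U orbT; apply.
have b'x := same_color_neq_x bU sb'.
by rewrite !att_leafE // !att_lcaSS att_ancSS; apply: bm => //; exact: att_old.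
Qed.

Lemma att_best_match_x b : b \in U' ->
  best_match att_vertices sigma att_parent att_root att_leaf x b /\
  best_match att_vertices sigma att_parent att_root att_leaf b x.
Proof.
move=> bU; have bx := old_neq_x bU.
split; split; rewrite ?inE ?eqxx ?bU ?orbT ?x_color // 1?eq_sym ?x_color //.
  move=> b' b'U sb'; have b'x := same_color_neq_x bU sb'.
  have -> : att_leaf x = None by rewrite /att_leaf eqxx.
  by rewrite !att_leafE // !att_lca_new; exact: anc_refl.
move=> b' b'U sb'; have -> : b' = x.
  by apply/eqP/negPn/negP => /(att_old b'U) /x_color; rewrite sb' eqxx.
exact: anc_refl.
Qed.

Lemma att_adj_old a b : a \in U' -> b \in U' -> adj att_edges a b = adj E1 a b.
Proof.
move=> aU bU; rewrite /adj inE; congr (_ && _).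
case: ([set a; b] \in E1) => //=; apply/negP => /imsetP [y _ ab].
have : x \in [set a; b] by rewrite ab !inE eqxx.
by rewrite !inE => /orP [] /eqP xab; move: x_new; rewrite xab ?aU ?bU.
Qed.

Lemma att_adj_x b : b \in U' -> adj att_edges x b.
Proof.
move=> bU; rewrite /adj inE eq_sym old_neq_x //=.
by apply/orP; right; apply/imsetP; exists b.
Qed.

Lemma attach_explains :
  explains att_vertices att_edges sigma att_parent att_root att_leaf.
Proof.
have [_ lf_inj lf_leaves expl_adj] := expl.
split.
- exact: att_phylo.
- move=> a b aU bU; rewrite /att_leaf.
  case: eqVneq => [->|ax]; case: eqVneq => [->|bx] // [].
  by apply: lf_inj; exact: att_old.
- case=> [t|]; last first.
    by split=> _; [exists x; rewrite /att_leaf ?inE eqxx | exact: att_leafN].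
  rewrite att_leafS; split=> [/lf_leaves [a aU <-]|[a aU]].
    by exists a; rewrite ?inE ?aU ?orbT // att_leafE // old_neq_x.
  rewrite /att_leaf; case: eqVneq => // ax [<-].
  by apply/lf_leaves; exists a => //; exact: att_old.
- move=> a b aU bU.
  case: (eqVneq a x) => [->|ax]; case: (eqVneq b x) => [->|bx].
  + by rewrite /adj eqxx; split=> // -[[_ _]]; rewrite eqxx.
  + have bU' := att_old bU bx.
    by split=> _; [exact: att_best_match_x | exact: att_adj_x].
  + have aU' := att_old aU ax.
    have [xa ax'] := att_best_match_x aU'.
    by rewrite adj_sym; split=> _; [split; [exact: ax' | exact: xa] | exact: att_adj_x].
  + have aU' := att_old aU ax; have bU' := att_old bU bx.
    rewrite att_adj_old //; split.
      by move/(expl_adj _ _ aU' bU') => [ab ba]; split; apply/att_best_match_old.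
    case=> /att_best_match_old ab /att_best_match_old ba.
    by apply/(expl_adj _ _ aU' bU'); split; [apply: ab | apply: ba].
Qed.
End AttachLeaf.

(* Contracting a rooted tree to a set of kept vertices containing the root,
   assuming no two consecutive vertices on a root path are dropped.  Every
   kept vertex is attached to its nearest kept proper ancestor; ancestry
   between kept vertices, and hence any lca that is kept, is unchanged. *)
Section Contraction.
Variables (T : finType) (p : T -> T) (r : T) (keep : pred T).
Hypothesis rt : rooted_tree p r.
Hypothesis keep_root : keep r.
Hypothesis keep_skip : forall u, keep u -> keep (p u) || keep (p (p u)).

Definition contracted := {t : T | keep t}.
Definition ct_root : contracted := Sub r keep_root.

(* The nearest kept proper ancestor of a kept vertex. *)
Definition skip (u : T) : T := if keep (p u) then p u else p (p u).
Definition ct_parent (t : contracted) : contracted := insubd ct_root (skip (val t)).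

Lemma keep_skipped u : keep u -> keep (skip u).
Proof. by move=> ku; rewrite /skip; case: ifP => // nkp; move: (keep_skip ku); rewrite nkp. Qed.

Lemma val_ct_parent t : val (ct_parent t) = skip (val t).
Proof. by rewrite /ct_parent insubdK //; apply: keep_skipped; exact: valP. Qed.

Lemma anc_skip u : anc p u (skip u).
Proof.
rewrite /skip; case: ifP => _; first exact: anc_parent.
exact: anc_trans (anc_parent p u) (anc_parent p (p u)).
Qed.

Lemma lift_anc n (u : contracted) : keep (iter n p (val u)) ->
  exists2 v : contracted, val v = iter n p (val u) & anc ct_parent u v.
Proof.
elim/ltn_ind: n u => -[|n] IH u keep_n; first by exists u => //; exact: anc_refl.
(* the contracted parent u' of u is its ancestor at distance k.+1 <= n.+1 *)
suff [k [u' [kn u'E uu']]] : exists k (u' : contracted),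
    [/\ k <= n, val u' = iter k.+1 p (val u) & ct_parent u = u'].
  have shift : iter (n - k) p (val u') = iter n.+1 p (val u).
    by rewrite u'E -iterD addnS subnK.
  have lt_nk : n - k < n.+1 by rewrite ltnS leq_subr.
  have keep' : keep (iter (n - k) p (val u')) by rewrite shift.
  have [v vE u'v] := IH (n - k) lt_nk u' keep'.
  exists v; first by rewrite vE shift.
  by rewrite -uu' in u'v; exact: anc_trans (fconnect1 _ _) u'v.
have [kp|nkp] := boolP (keep (p (val u))).
  by exists 0, (Sub _ kp); split=> //; apply: val_inj; rewrite val_ct_parent /skip kp.
have kpp : keep (p (p (val u))) by move: (keep_skip (valP u)); rewrite (negbTE nkp).
case: n IH keep_n => [|n] _ keep_n; first by rewrite /= (negbTE nkp) in keep_n.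
by exists 1, (Sub _ kpp); split=> //; apply: val_inj; rewrite val_ct_parent /skip (negbTE nkp).
Qed.

Lemma ct_ancE (u v : contracted) : anc ct_parent u v = anc p (val u) (val v).
Proof.
apply/idP/idP => [/iter_findex <-|/iter_findex vE].
  elim: (findex _ _ _) => [|k IH]; first exact: anc_refl.
  by rewrite iterS val_ct_parent; exact: anc_trans IH (anc_skip _).
by have := @lift_anc (findex p (val u) (val v)) u; rewrite vE => /(_ (valP v)) [w /val_inj ->].
Qed.

Lemma ct_rooted : rooted_tree ct_parent ct_root.
Proof.
split; first by apply: val_inj; rewrite val_ct_parent /skip root_fixed // keep_root.
by move=> v; have := ct_ancE v ct_root; rewrite /anc => ->; exact: anc_root.
Qed.

Lemma ct_childrenE (v w : contracted) :
  (w \in children ct_parent ct_root v) = (val w != r) && (skip (val w) == val v).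
Proof. by rewrite !inE -!(inj_eq val_inj) val_ct_parent. Qed.

Lemma ct_child_nonleaf (v w : contracted) :
  w \in children ct_parent ct_root v -> ~~ is_leaf p r (val v).
Proof.
rewrite ct_childrenE /skip /is_leaf => /andP [w_neq_r]; case: ifP => kp /eqP wv.
  by apply/set0Pn; exists (val w); rewrite inE w_neq_r wv eqxx.
apply/set0Pn; exists (p (val w)); rewrite inE wv eqxx andbT.
by apply: contraFneq kp => ->.
Qed.

Lemma ct_lca (a b : contracted) : keep (lca p r (val a) (val b)) ->
  val (lca ct_parent ct_root a b) = lca p r (val a) (val b).
Proof.
move=> kz; suff -> : lca ct_parent ct_root a b = Sub _ kz by [].
apply: (lca_eq ct_rooted); rewrite /is_lca !ct_ancE /=.
have /and3P [az bz /forallP zmin] := lca_spec rt (val a) (val b).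
by apply/and3P; split=> //; apply/forallP => w; rewrite !ct_ancE; exact: zmin.
Qed.
End Contraction.

(* Removing the leaf of a uniquely colored vertex x from a tree explaining
   (U, E).  The leaf xl of x is dropped, together with its parent xq when xq
   is an inner non-root vertex left with a single child (the sibling of xl).
   The contracted tree is phylogenetic, keeps every lca of remaining leaves,
   and, as no vertex other than x has the color of x, explains the graph
   induced on U :\ x. *)
Section RemoveLeaf.
Variables (V S : finType) (U : {set V}) (E : {set {set V}}) (sigma : V -> S).
Variables (T : finType) (p : T -> T) (r : T) (lf : V -> T) (x y0 : V).
Hypothesis expl : explains U E sigma p r lf.
Hypothesis xU : x \in U.
Hypothesis x_color : forall y, y \in U -> y != x -> sigma y != sigma x.
Hypothesis y0U : y0 \in U.
Hypothesis y0x : y0 != x.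

Let ph : phylo_tree p r. Proof. by case: expl. Qed.
Let rt : rooted_tree p r. Proof. by case: ph. Qed.
Let lf_inj : {in U &, injective lf}. Proof. by case: expl. Qed.
Let lf_leaves t : is_leaf p r t <-> exists2 a, a \in U & lf a = t.
Proof. by case: expl. Qed.

Lemma lf_leaf a : a \in U -> is_leaf p r (lf a).
Proof. by move=> aU; apply/lf_leaves; exists a. Qed.

Definition xl := lf x.
Definition xq := p xl.

(* xq is suppressed when removing xl leaves it with a single child. *)
Definition suppressed := (xq != r) && (#|children p r xq| == 2).
Definition kept (t : T) := (t != xl) && ~~ (suppressed && (t == xq)).

Lemma lf_neq_xl a : a \in U -> a != x -> lf a != xl.
Proof. by move=> aU; apply: contra => /eqP /lf_inj ->. Qed.

Lemma xl_neq_root : xl != r.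
Proof.
apply: contraNneq (lf_neq_xl y0U y0x) => xl_r.
have r_leaf : is_leaf p r r by move: (lf_leaf xU); rewrite -/xl xl_r.
by rewrite (leaf_root rt r_leaf (lf y0)) xl_r.
Qed.

Lemma xl_child : xl \in children p r xq.
Proof. by rewrite inE xl_neq_root eqxx. Qed.

Lemma xq_inner : ~~ is_leaf p r xq.
Proof. exact: child_nonleaf xl_child. Qed.

Lemma parent_neq_xl u : p u != xl.
Proof.
apply/eqP => pu.
have uxl : u = xl by apply: (anc_leaf rt (lf_leaf xU)); rewrite -/xl -pu; exact: anc_parent.
have : p xl = xl by rewrite -{1}uxl pu.
by move/(fixed_root rt)/eqP; rewrite (negbTE xl_neq_root).
Qed.

Lemma kept_root : kept r.
Proof.
rewrite /kept eq_sym xl_neq_root /= /suppressed.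
by apply/negP => /andP [/andP [/negP xq_r _] /eqP rq]; apply: xq_r; rewrite rq.
Qed.

(* Only xl and xq may be dropped, and the parent of a dropped xq is kept;
   so the contraction of the previous section applies. *)
Lemma kept_skip u : kept u -> kept (p u) || kept (p (p u)).
Proof.
move=> _; apply/orP; case: (boolP (kept (p u))) => [|drop]; [left | right] => //.
move: drop; rewrite /kept parent_neq_xl /= negbK => /andP [supp /eqP pu_q].
rewrite parent_neq_xl /= pu_q negb_and; apply/orP; right.
by apply: contraNneq (proj1 (andP supp)) => /(fixed_root rt) ->.
Qed.

Lemma dropped_xq c : ~~ kept c -> c != xl -> c = xq /\ suppressed.
Proof. by move=> + c_neq; rewrite /kept c_neq negbK => /andP [supp /eqP]. Qed.

Definition rm_parent := ct_parent p kept_root.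
Definition rm_root := ct_root kept_root.

Lemma rm_childrenE (v w : contracted kept) :
  (w \in children rm_parent rm_root v) = (val w != r) && (skip p kept (val w) == val v).
Proof. exact: ct_childrenE kept_skip v w. Qed.

Definition sibling := odflt xl [pick c in children p r xq :\ xl].

Lemma sibling_spec : suppressed ->
  [/\ sibling \in children p r xq, sibling != xl &
      forall c, c \in children p r xq -> c != xl -> c = sibling].
Proof.
move=> /andP [_ /eqP two].
have : #|children p r xq :\ xl| == 1.
  by move: two; rewrite (cardsD1 xl) xl_child add1n => -[->].
case/cards1P => s0 s0E; have s0D : s0 \in children p r xq :\ xl by rewrite s0E set11.
have -> : sibling = s0.
  rewrite /sibling; case: pickP => [c|/(_ s0)]; rewrite s0E inE ?eqxx //.
  by move/eqP.
move: s0D; rewrite in_setD1 => /andP [s0_neq s0_child]; split=> // c cq c_neq.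
by apply/set1P; rewrite -s0E in_setD1 c_neq cq.
Qed.

Lemma kept_sibling : suppressed -> kept sibling.
Proof.
move=> supp; have [sq s_neq _] := sibling_spec supp.
by rewrite /kept s_neq negb_and (child_neq rt sq) orbT.
Qed.

(* A child c of a kept vertex is represented in the contracted tree by c
   itself, or by the sibling of xl when c is the suppressed xq. *)
Definition lift (c : T) : T := if kept c then c else sibling.
Definition lifted (c : T) : contracted kept := insubd rm_root (lift c).

Lemma lifted_child (v : contracted kept) c :
  c \in children p r (val v) -> c != xl -> lifted c \in children rm_parent rm_root v.
Proof.
move=> cv c_neq; have pc := child_parent cv; rewrite rm_childrenE /lifted /lift.
case: ifP => [kc|/negbT/dropped_xq/(_ c_neq) [c_xq supp]].
  by rewrite insubdK //= /skip pc (valP v) eqxx andbT; move: cv; rewrite inE => /andP [].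
have [sq _ _] := sibling_spec supp.
rewrite insubdK; last exact: kept_sibling supp.
rewrite /skip (child_parent sq) -c_xq pc.
have -> : kept c = false by rewrite c_xq /kept supp eqxx andbF.
by rewrite eqxx andbT; move: sq; rewrite inE => /andP [].
Qed.

Lemma kept_lift c : c != xl -> kept (lift c).
Proof.
rewrite /lift; case: ifP => // /negbT drop /(dropped_xq drop) [_ supp].
exact: kept_sibling.
Qed.

Lemma lift_inj v : {in children p r v :\ xl &, injective lift}.
Proof.
have mixed c c' : c \in children p r v -> c' \in children p r v -> c' != xl ->
    kept c -> ~~ kept c' -> c != sibling.
  move=> cv c'v c'_neq _ /dropped_xq /(_ c'_neq) [c'_xq supp].
  apply: contraTneq (proj1 (andP supp)) => c_s; rewrite negbK; apply/eqP.
  apply: (fixed_root rt); have [sq _ _] := sibling_spec supp.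
  by rewrite -{1}c'_xq (child_parent c'v) -(child_parent cv) c_s (child_parent sq).
move=> c c'; rewrite !in_setD1 => /andP [c_neq cv] /andP [c'_neq c'v].
rewrite /lift; case: ifP => kc; case: ifP => kc' //.
- by move=> c_s; have := mixed _ _ cv c'v c'_neq kc (negbT kc'); rewrite c_s eqxx.
- by move=> s_c'; have := mixed _ _ c'v cv c_neq kc' (negbT kc); rewrite s_c' eqxx.
- move=> _; have [-> _] := dropped_xq (negbT kc) c_neq.
  by have [-> _] := dropped_xq (negbT kc') c'_neq.
Qed.

Lemma rm_children_card (v : contracted kept) :
  #|children p r (val v) :\ xl| <= #|children rm_parent rm_root v|.
Proof.
have lifted_inj : {in children p r (val v) :\ xl &, injective lifted}.
  move=> c c' cD c'D /(congr1 val); move: (cD) (c'D).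
  rewrite !in_setD1 => /andP [c_neq _] /andP [c'_neq _].
  rewrite /lifted (insubdK _ (kept_lift c_neq)) (insubdK _ (kept_lift c'_neq)).
  exact: (lift_inj cD c'D).
rewrite -(card_in_imset lifted_inj).
apply/subset_leq_card/subsetP => w /imsetP [c]; rewrite in_setD1 => /andP [c_neq cv] ->.
exact: lifted_child.
Qed.

(* xq has a child besides xl: it has two children if it is not the root,
   and the root has the leaf of y0 below a child different from xl. *)
Lemma other_child : exists2 c, c \in children p r xq & c != xl.
Proof.
have [xq_r|xq_neq_r] := eqVneq xq r; last first.
  have := ph.2 xq xq_neq_r xq_inner; rewrite (cardsD1 xl) xl_child add1n ltnS.
  by case/card_gt0P => c; rewrite in_setD1 => /andP [c_neq cq]; exists c.
have y0_neq_r : lf y0 != r.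
  apply: contraNneq xq_inner => y0_r.
  have r_leaf : is_leaf p r r by rewrite -{2}y0_r lf_leaf.
  by rewrite (leaf_root rt r_leaf xq).
have [c cr y0c] := below_child rt (anc_root rt (lf y0)) y0_neq_r.
exists c; first by rewrite xq_r.
apply: contraNneq (lf_neq_xl y0U y0x) => c_xl.
by apply/eqP; apply: (anc_leaf rt (lf_leaf xU)); rewrite -/xl -c_xl.
Qed.

Lemma inner_children t : ~~ is_leaf p r t -> 0 < #|children p r t :\ xl|.
Proof.
move=> /set0Pn [c ct]; apply/card_gt0P.
have [c_xl|c_neq] := eqVneq c xl; last by exists c; rewrite in_setD1 c_neq.
have <- : xq = t by rewrite -(child_parent ct) c_xl.
by have [c' c'q c'_neq] := other_child; exists c'; rewrite in_setD1 c'_neq.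
Qed.

Lemma rm_leafE (t : contracted kept) :
  is_leaf rm_parent rm_root t = is_leaf p r (val t).
Proof.
apply/idP/idP => [|t_leaf]; last first.
  by apply/set0Pn => -[w /(ct_child_nonleaf kept_skip)]; rewrite t_leaf.
apply: contraTT => /inner_children pos.
by rewrite /is_leaf -card_gt0; exact: leq_trans pos (rm_children_card t).
Qed.

Lemma rm_rooted : rooted_tree rm_parent rm_root.
Proof. exact: ct_rooted rt kept_root kept_skip. Qed.

Lemma rm_phylo : phylo_tree rm_parent rm_root.
Proof.
split=> [|v v_neq_root]; first exact: rm_rooted.
rewrite rm_leafE => v_inner; apply: leq_trans (rm_children_card v).
have v_neq_r : val v != r by rewrite -(inj_eq val_inj) in v_neq_root.
have := ph.2 _ v_neq_r v_inner; rewrite (cardsD1 xl).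
case: (boolP (xl \in _)) => [xl_in|_]; last by rewrite add0n.
(* v is xq, kept, hence not suppressed: it keeps two children besides xl *)
have v_xq : val v = xq by rewrite -(child_parent xl_in).
have not_two : #|children p r xq| != 2.
  have := valP v; rewrite /kept v_xq eqxx andbT /suppressed => /andP [_].
  by rewrite -v_xq v_neq_r.
move: not_two; rewrite (cardsD1 xl) -v_xq xl_in add1n.
by case: (#|_|) => [|[|k]]. (* 1 + k != 2 and 2 <= 1 + k imply 2 <= k *)
Qed.

Lemma below_sibling u : kept u -> suppressed -> anc p u xq -> anc p u sibling.
Proof.
move=> ku supp uq; have [_ _ sib_uniq] := sibling_spec supp.
have u_neq : u != xq by apply: contraTneq ku => ->; rewrite /kept supp eqxx /= andbF.
have [c cq uc] := below_child rt uq u_neq.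
rewrite -(sib_uniq c cq) //; apply: contraTneq ku => c_xl.
by rewrite /kept (anc_leaf rt (lf_leaf xU) (_ : anc p u xl)) ?eqxx // -/xl -c_xl.
Qed.

(* The lca of two kept vertices is kept: it is not the leaf xl, and a
   suppressed xq cannot be it since its sibling lies between. *)
Lemma kept_lca (a b : contracted kept) : kept (lca p r (val a) (val b)).
Proof.
have /and3P [az bz /forallP zmin] := lca_spec rt (val a) (val b).
set z := lca p r _ _ in az bz zmin *.
have ka := valP a; have kb := valP b.
apply/andP; split.
  apply: contraTneq ka => z_xl.
  by rewrite /kept (anc_leaf rt (lf_leaf xU) (_ : anc p (val a) xl)) ?eqxx // -/xl -z_xl.
apply/negP => /andP [supp /eqP z_xq]; rewrite z_xq in az bz zmin.
have [sq _ _] := sibling_spec supp.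
have qs : anc p xq sibling.
  have := zmin sibling; rewrite (below_sibling ka supp az) (below_sibling kb supp bz).
  by move/implyP; apply.
have sq_anc : anc p sibling xq by rewrite -(child_parent sq); exact: anc_parent.
by have := child_neq rt sq; rewrite (anc_antisym rt sq_anc qs) eqxx.
Qed.

Lemma rm_anc_lca (a b c : contracted kept) :
  anc rm_parent (lca rm_parent rm_root a b) (lca rm_parent rm_root a c) =
  anc p (lca p r (val a) (val b)) (lca p r (val a) (val c)).
Proof. by rewrite (ct_ancE kept_root kept_skip) !(ct_lca rt kept_root kept_skip) ?kept_lca. Qed.

Definition rm_leaf (a : V) : contracted kept := insubd rm_root (lf a).

Lemma kept_lf a : a \in U :\ x -> kept (lf a).
Proof.
rewrite in_setD1 => /andP [a_neq aU]; rewrite /kept lf_neq_xl //= negb_and.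
by apply/orP; right; apply: contraNneq xq_inner => <-; exact: lf_leaf.
Qed.

Lemma val_rm_leaf a : a \in U :\ x -> val (rm_leaf a) = lf a.
Proof. by move=> aU; rewrite /rm_leaf (insubdK _ (kept_lf aU)). Qed.

(* Best matches among U :\ x are unchanged: x has a color of its own. *)
Lemma rm_best_match a b : a \in U :\ x -> b \in U :\ x ->
  best_match (U :\ x) sigma rm_parent rm_root rm_leaf a b <->
  best_match U sigma p r lf a b.
Proof.
move=> aU' bU'; have := aU'; have := bU'.
rewrite !in_setD1 => /andP [b_neq bU] /andP [a_neq aU].
split=> -[_ _ sab bm]; split=> // b' b'U sb'.
  have b'_neq : b' != x.
    by apply/eqP => b'x; move: (x_color bU b_neq); rewrite -sb' b'x eqxx.
  have b'U' : b' \in U :\ x by rewrite in_setD1 b'_neq.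
  by have := bm b' b'U' sb'; rewrite rm_anc_lca !val_rm_leaf.
have b'U0 : b' \in U by move: b'U; rewrite in_setD1 => /andP [].
by rewrite rm_anc_lca !val_rm_leaf //; exact: bm.
Qed.

Lemma restrict_explains :
  explains (U :\ x) (avoiding x E) sigma rm_parent rm_root rm_leaf.
Proof.
have [_ _ _ expl_adj] := expl.
have inU a : a \in U :\ x -> a \in U by rewrite in_setD1 => /andP [].
split.
- exact: rm_phylo.
- move=> a b aU bU /(congr1 val); rewrite !val_rm_leaf //.
  by apply: lf_inj; exact: inU.
- move=> t; rewrite rm_leafE; split=> [/lf_leaves [a aU lf_t] | [a aU <-]].
    have a_neq : a != x.
      by apply: contraTneq (valP t) => a_x; rewrite -lf_t a_x /kept eqxx.
    have aU' : a \in U :\ x by rewrite in_setD1 a_neq.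
    by exists a => //; apply: val_inj; rewrite val_rm_leaf.
  by rewrite val_rm_leaf //; apply: lf_leaf; exact: inU.
- move=> a b aU bU.
  have -> : adj (avoiding x E) a b = adj E a b.
    rewrite /adj inE; move: aU bU; rewrite !in_setD1 => /andP [a_neq _] /andP [b_neq _].
    by rewrite !inE negb_or (eq_sym x a) (eq_sym x b) a_neq b_neq !andbT.
  have adj_bm := expl_adj _ _ (inU _ aU) (inU _ bU).
  split=> [/adj_bm [ab ba]|[/(rm_best_match aU bU) ab /(rm_best_match bU aU) ba]].
    by split; apply/rm_best_match.
  by apply/adj_bm.
Qed.
End RemoveLeaf.

Section HubVertex.
Variables (V S : finType) (U : {set V}) (E : {set {set V}}) (sigma : V -> S).
Variables (n : nat) (x : V).
Hypothesis colored : properly_colored U E sigma n.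
Hypothesis hub_x : hub U E x.

Let wfE : wf_graph U E. Proof. by case: colored. Qed.
Let xU : x \in U. Proof. by case: hub_x. Qed.

Lemma hub_edge y : y \in U -> y != x -> [set x; y] \in E.
Proof. by move=> yU y_neq; have := hub_x.2 y yU y_neq; rewrite /adj => /andP []. Qed.

Definition hub_edges := [set [set x; y] | y in U :\ x].

(* Being adjacent to every vertex, x has a color of its own. *)
Lemma hub_color y : y \in U -> y != x -> sigma y != sigma x.
Proof. by move=> yU y_neq; rewrite eq_sym; case: colored => _ -> //; exact: hub_x.2. Qed.

Lemma hub_color_del y : y \in U :\ x -> sigma y != sigma x.
Proof. by rewrite in_setD1 => /andP [y_neq yU]; exact: hub_color. Qed.

Lemma ncolors_del : ncolors (U :\ x) sigma = n.-1.
Proof.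
case: colored => _ _ <-; rewrite /ncolors -{2}(setD1K xU) imsetU1 cardsU1.
suff -> : sigma x \notin sigma @: (U :\ x) by [].
by apply/imsetP => -[y yU /eqP]; rewrite eq_sym (negbTE (hub_color_del yU)).
Qed.

Lemma pairs_del e : (e \in pairs (U :\ x)) = (e \in pairs U) && (x \notin e).
Proof. by rewrite !inE subsetD1 andbAC. Qed.

Lemma hub_edgesE e : (e \in hub_edges) = (e \in E) && (x \in e).
Proof.
apply/imsetP/andP => [[y] | [eE xe]].
  rewrite in_setD1 => /andP [y_neq yU] ->; split; last by rewrite !inE eqxx.
  exact: hub_edge.
have := subsetP wfE _ eE; rewrite inE => /andP [eU /eqP two].
have /cards1P [y ey] : #|e :\ x| == 1.
  by move: two; rewrite (cardsD1 x) xe add1n => -[->].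
have : y \in e :\ x by rewrite ey set11.
rewrite in_setD1 => /andP [y_neq ye]; exists y; first by rewrite in_setD1 y_neq (subsetP eU).
by rewrite -(setD1K xe) ey.
Qed.

(* Degenerate case of the extension: with at most one vertex besides x,
   the extended graph is complete and is explained by a star. *)
Lemma hub_extend_small (E1 : {set {set V}}) : {in U :\ x &, forall a b, a = b} ->
  exists (T : finType) (p : T -> T) (r : T) (lf : V -> T),
    explains U (E1 :|: hub_edges) sigma p r lf.
Proof.
move=> small.
have others a b : a \in U -> b \in U -> a != x -> b != x -> a = b.
  by move=> aU bU ax bx; apply: small; rewrite in_setD1 ?ax ?bx.
do 4 eexists; apply: (star_explains xU).
  move=> a b aU bU sab; case: (eqVneq a x) => [ax|ax]; case: (eqVneq b x) => [bx|bx].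
  - by rewrite ax bx.
  - by move: (hub_color bU bx); rewrite -sab ax eqxx.
  - by move: (hub_color aU ax); rewrite sab bx eqxx.
  - exact: others.
move=> a b aU bU; split=> [/andP [] //|ab]; rewrite /adj ab inE hub_edgesE.
apply/orP; right; case: (eqVneq a x) => [ax|ax]; case: (eqVneq b x) => [bx|bx].
- by move: ab; rewrite ax bx eqxx.
- by rewrite ax hub_edge // !inE eqxx.
- by rewrite bx setUC hub_edge // !inE eqxx.
- by move: ab; rewrite (others a b) ?eqxx.
Qed.

Lemma hub_extend (E1 : {set {set V}}) : E1 \subset pairs (U :\ x) ->
  nRBMG (U :\ x) E1 sigma n.-1 -> nRBMG U (E1 :|: hub_edges) sigma n.
Proof.
move=> E1_pairs [_ E1_tree].
suff [T [p [r [lf expl]]]] : exists (T : finType) (p : T -> T) (r : T) (lf : V -> T),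
    explains U (E1 :|: hub_edges) sigma p r lf.
  split; last by right; exists T, p, r, lf.
  split; [|exact: explains_proper expl | by case: colored].
  apply/subsetP => e; rewrite inE hub_edgesE => /orP [/(subsetP E1_pairs)|/andP [eE _]].
    by rewrite pairs_del => /andP [].
  exact: (subsetP wfE).
case: E1_tree => [U0|[T [p [r [lf expl]]]]].
  by apply: hub_extend_small => // a b; rewrite U0 inE.
have [r_leaf|r_inner] := boolP (is_leaf p r r).
  apply: hub_extend_small => // a b aU bU; have [[rt _] lf_inj _ _] := expl.
  by apply: lf_inj; rewrite // (leaf_root rt r_leaf (lf a)) (leaf_root rt r_leaf (lf b)).
exists (option T), (att_parent p r), (att_root r), (att_leaf lf x).
have -> : U = att_vertices (U :\ x) x by rewrite /att_vertices setD1K.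
apply: attach_explains; rewrite // ?in_setD1 ?eqxx //.
exact: hub_color_del.
Qed.

Lemma hub_restrict (E2 : {set {set V}}) :
  nRBMG U E2 sigma n -> nRBMG (U :\ x) (avoiding x E2) sigma n.-1.
Proof.
move=> [[wf2 proper2 _] E2_tree]; split.
  split; last exact: ncolors_del.
    apply/subsetP => e; rewrite inE pairs_del => /andP [eE2 ->].
    by rewrite (subsetP wf2).
  move=> a b aU bU /andP [ab]; rewrite inE => /andP [abE _].
  by apply: proper2; rewrite ?(subsetP (subD1set U x)) // /adj ab.
case: E2_tree => [U0|[T [p [r [lf expl]]]]]; first by move: xU; rewrite U0 inE.
have [->|[y0 y0U']] := set_0Vmem (U :\ x); first by left.
move: (y0U'); rewrite in_setD1 => /andP [y0x y0U].
right; do 4 eexists; exact: (restrict_explains expl xU hub_color y0U y0x).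
Qed.

(* In both
   directions the edges at x are those of the star, untouched by F. *)
Lemma deletion_restrict F : deletion_set U E sigma n F ->
  deletion_set (U :\ x) (avoiding x E) sigma n.-1 (avoiding x F).
Proof.
case=> FE del; split; first by apply/subsetP => e; rewrite !inE => /andP [/(subsetP FE) -> ->].
have -> : avoiding x E :\: avoiding x F = avoiding x (E :\: F).
  by apply/setP => e; rewrite !inE; case: (x \in e); rewrite ?andbF ?andbT.
exact: hub_restrict.
Qed.

Lemma deletion_extend F : deletion_set (U :\ x) (avoiding x E) sigma n.-1 F ->
  deletion_set U E sigma n F.
Proof.
case=> FE del; split; first by apply/subsetP => e /(subsetP FE); rewrite inE => /andP [].
(* F avoids x, so it leaves the star at x in place *)
have -> : E :\: F = (avoiding x E :\: F) :|: hub_edges.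
  apply/setP => e; rewrite !inE hub_edgesE.
  case: (boolP (x \in e)) => xe; rewrite ?andbT ?andbF ?orbF //=.
  by case eF: (e \in F) => //=; move/(subsetP FE): eF; rewrite inE xe andbF.
apply: hub_extend => //; apply/subsetP => e; rewrite in_setD inE pairs_del.
by case/andP => _ /andP [eE ->]; rewrite (subsetP wfE).
Qed.

Lemma edit_restrict F : edit_set U E sigma n F ->
  edit_set (U :\ x) (avoiding x E) sigma n.-1 (avoiding x F).
Proof.
case=> F_pairs edit; split.
  by apply/subsetP => e; rewrite inE pairs_del => /andP [/(subsetP F_pairs) -> ->].
have -> : symdiff (avoiding x E) (avoiding x F) = avoiding x (symdiff E F).
  by apply/setP => e; rewrite !inE; case: (x \in e); rewrite ?andbF ?andbT.
exact: hub_restrict.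
Qed.

Lemma edit_extend F : edit_set (U :\ x) (avoiding x E) sigma n.-1 F ->
  edit_set U E sigma n F.
Proof.
have pairs_avoid e : e \in pairs (U :\ x) -> x \notin e by rewrite pairs_del => /andP [].
case=> F_pairs edit; split.
  by apply/subsetP => e /(subsetP F_pairs); rewrite pairs_del => /andP [].
(* F avoids x, so it leaves the star at x in place *)
have -> : symdiff E F = symdiff (avoiding x E) F :|: hub_edges.
  apply/setP => e; rewrite !inE hub_edgesE.
  case: (boolP (x \in e)) => xe; rewrite ?andbT ?andbF ?orbF //=.
  have -> : (e \in F) = false.
    by apply/negbTE; apply: contraL xe => /(subsetP F_pairs)/pairs_avoid.
  by rewrite /= andbF orbF.
apply: hub_extend => //; apply/subsetP => e; rewrite inE !in_setD => /orP [] /andP [_].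
  by rewrite inE pairs_del => /andP [eE ->]; rewrite (subsetP wfE).
exact: (subsetP F_pairs).
Qed.
End HubVertex.

(* Minimum-cardinality sets transfer between two properties P and Q when Q
   implies P, and P-sets shrink (via f) to Q-sets: a minimum P-set cannot
   shrink, so it is a Q-set, and conversely. *)
Lemma minimum_transfer (T : finType) (P Q : {set T} -> Prop)
  (f : {set T} -> {set T}) :
  (forall A, f A \subset A) -> (forall A, P A -> Q (f A)) -> (forall A, Q A -> P A) ->
  forall A, (P A /\ forall B, P B -> #|A| <= #|B|) <->
            (Q A /\ forall B, Q B -> #|A| <= #|B|).
Proof.
move=> f_sub PQ QP A; split=> [[PA Amin] | [QA Amin]].
  have fA : f A = A.
    apply/eqP; rewrite eqEcard f_sub; exact: Amin (QP _ (PQ _ PA)).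
  by split=> [|B /QP]; [rewrite -fA; exact: PQ | exact: Amin].
split=> [|B /PQ /Amin]; first exact: QP.
by move/leq_trans; apply; apply: subset_leq_card.
Qed.

Theorem mainTheorem6 (V S : finType) (U : {set V}) (E : {set {set V}})
  (sigma : V -> S) (n : nat) (x : V) :
  properly_colored U E sigma n -> hub U E x ->
  forall F : {set {set V}},
    (optimal_deletion_set U E sigma n F <->
     optimal_deletion_set (del_vertex U E x).1 (del_vertex U E x).2 sigma n.-1 F) /\
    (optimal_edit_set U E sigma n F <->
     optimal_edit_set (del_vertex U E x).1 (del_vertex U E x).2 sigma n.-1 F).
Proof.
move=> colored hub_x F; split; apply: (minimum_transfer (f := avoiding x)) => //.
- exact: avoiding_sub.
- exact: deletion_restrict.
- exact: deletion_extend.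
- exact: avoiding_sub.
- exact: edit_restrict.
- exact: edit_extend.
Qed.
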